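(* Let $M$ be a nest with standard labelling. Then: (i) if $C$ is a non-spanning circuit of $M$, then $|C|\in\{4,6\}$; (ii) if $C$ is a circuit of $M$ with $|C|=4$, then $C$ is one of the $15$ circuits listed in condition (1) of the definition of a nest; (iii) if $\{e_i,e_j,e_k',e_\ell'\}$ is a circuit of $M$, then $\{e_i,e_j\}\cup(\{e_1',\dots,e_6'\}-\{e_k',e_\ell'\})$ and $(\{e_1,\dots,e_6\}-\{e_i,e_j\})\cup\{e_k',e_\ell'\}$ are $6$-element circuits of $M$; (iv) if $C$ is a circuit of $M$ with $|C|=6$ that is not described in (iii), then $C\in\{\{e_1,\dots,e_6\},\{e_1',\dots,e_6'\}\}$.
   Context: A matroid $M$ is a nest if $r(M)=r^*(M)=6$ and its ground set has a labelling $\{e_1,e_1',\dots,e_6,e_6'\}$ such that (1) the following sets are circuits: $\{e_1,e_2,e_3',e_4'\}$, $\{e_3,e_4,e_5',e_6'\}$, $\{e_5,e_6,e_1',e_2'\}$, $\{e_5,e_4,e_1',e_3'\}$, $\{e_1,e_3,e_2',e_6'\}$, $\{e_2,e_6,e_5',e_4'\}$, $\{e_2,e_3,e_5',e_1'\}$, $\{e_5,e_1,e_4',e_6'\}$, $\{e_4,e_6,e_2',e_3'\}$, $\{e_4,e_1,e_2',e_5'\}$, $\{e_2,e_5,e_3',e_6'\}$, $\{e_3,e_6,e_4',e_1'\}$, $\{e_3,e_5,e_4',e_2'\}$, $\{e_4,e_2,e_1',e_6'\}$, $\{e_1,e_6,e_3',e_5'\}$; and (2) the following sets are cocircuits: $\{e_3,e_4,e_1',e_2'\}$,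 $\{e_1,e_2,e_5',e_6'\}$, $\{e_5,e_6,e_3',e_4'\}$, $\{e_1,e_3,e_5',e_4'\}$, $\{e_5,e_4,e_2',e_6'\}$, $\{e_2,e_6,e_1',e_3'\}$, $\{e_5,e_1,e_2',e_3'\}$, $\{e_2,e_3,e_4',e_6'\}$, $\{e_4,e_6,e_5',e_1'\}$, $\{e_2,e_5,e_4',e_1'\}$, $\{e_4,e_1,e_3',e_6'\}$, $\{e_3,e_6,e_2',e_5'\}$, $\{e_4,e_2,e_3',e_5'\}$, $\{e_3,e_5,e_1',e_6'\}$, $\{e_1,e_6,e_4',e_2'\}$. $M$ has standard labelling if its ground set is literally $\{e_1,e_1',\dots,e_6,e_6'\}$ with this labelling being the identity. *)

From mathcomp Require Import all_boot.
Set Implicit Arguments. Unset Strict Implicit. Unset Printing Implicit Defensive.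

Record matroid (T : finType) := Matroid {
  indep : {set T} -> bool;
  indep0 : indep set0;
  indep_sub : forall A B : {set T}, A \subset B -> indep B -> indep A;
  indep_aug : forall A B : {set T}, indep A -> indep B -> #|A| < #|B| ->
     exists2 x, x \in B :\: A & indep (x |: A)
}.

Section MatroidNotions.
Variable T : finType.
Variable M : matroid T.

Definition is_basis (B : {set T}) : bool :=
  indep M B && [forall C : {set T}, (indep M C && (B \subset C)) ==> (C == B)].

Definition rk (X : {set T}) : nat := \max_(A : {set T} | indep M A && (A \subset X)) #|A|.
Definition rank : nat := rk setT.

Definition dual_indep (A : {set T}) : bool :=
  [exists B : {set T}, is_basis B && (A \subset ~: B)].
Definition corank : nat :=
  \max_(A : {set T} | dual_indep A) #|A|.

Definition min_dep (I : {set T} -> bool) (C : {set T}) : bool :=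
  ~~ I C && [forall D : {set T}, (D \proper C) ==> I D].
Definition circuit (C : {set T}) : bool := min_dep (indep M) C.
Definition cocircuit (C : {set T}) : bool := min_dep dual_indep C.
Definition spanning (X : {set T}) : bool := rk X == rank.
End MatroidNotions.

(* Standard ground set {e_1,e_1',...,e_6,e_6'}: e_i = (i,false), e_i' = (i,true),
   with indices i : 'I_6 (0-based: paper's e_1 is e ord0, ..., e_6 is e 5). *)
Definition Gnd := ('I_6 * bool)%type.
Definition e (i : 'I_6) : Gnd := (i, false).
Definition e' (i : 'I_6) : Gnd := (i, true).
Definition Eset : {set Gnd} := [set e i | i : 'I_6].
Definition E'set : {set Gnd} := [set e' i | i : 'I_6].

(* 1-based index conversion used only for transcribing the paper's lists *)
Definition ix (n : nat) : 'I_6 := inord n.-1.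
Definition quad (i j k l : 'I_6) : {set Gnd} := [set e i; e j; e' k; e' l].
Definition quadn (q : nat * nat * nat * nat) : {set Gnd} :=
  let: (i, j, k, l) := q in quad (ix i) (ix j) (ix k) (ix l).

(* the 15 circuits of condition (1), 1-based as in the paper: (i,j,k,l) = {e_i,e_j,e_k',e_l'} *)
Definition nest_circuits : seq (nat * nat * nat * nat) :=
  [:: (1,2,3,4); (3,4,5,6); (5,6,1,2); (5,4,1,3); (1,3,2,6); (2,6,5,4);
      (2,3,5,1); (5,1,4,6); (4,6,2,3); (4,1,2,5); (2,5,3,6); (3,6,4,1);
      (3,5,4,2); (4,2,1,6); (1,6,3,5)].
Definition nest_cocircuits : seq (nat * nat * nat * nat) :=
  [:: (3,4,1,2); (1,2,5,6); (5,6,3,4); (1,3,5,4); (5,4,2,6); (2,6,1,3);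
      (5,1,2,3); (2,3,4,6); (4,6,5,1); (2,5,4,1); (4,1,3,6); (3,6,2,5);
      (4,2,3,5); (3,5,1,6); (1,6,4,2)].

Definition std_nest (M : matroid Gnd) : Prop :=
  rank M = 6 /\ corank M = 6 /\
  (forall q, q \in nest_circuits -> circuit M (quadn q)) /\
  (forall q, q \in nest_cocircuits -> cocircuit M (quadn q)).

Definition six1 (i j k l : 'I_6) : {set Gnd} := [set e i; e j] :|: (E'set :\: [set e' k; e' l]).
Definition six2 (i j k l : 'I_6) : {set Gnd} := (Eset :\: [set e i; e j]) :|: [set e' k; e' l].

(* A circuit and a cocircuit never meet in exactly one element, and a circuit
   contains no other circuit.  Tested against the fifteen given circuits and
   cocircuits, these two conditions leave only 47 of the 2^12 subsets with at
   most six = r(M) elements: the fifteen 4-sets Q, their symmetric differences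
   with E = {e_1,...,e_6} and E' = {e_1',...,e_6'} (the 6-sets of (iii)), and
   E, E' themselves; this is checked by exhaustive computation.  A larger
   circuit spans.  Each 6-set of (iii) is dependent because the complement of
   this would-be basis contains a given cocircuit, and minimally so because a
   smaller circuit would be one of the fifteen 4-sets, none of which it
   contains. *)

From mathcomp Require Import all_boot zmodp.
Set Implicit Arguments. Unset Strict Implicit. Unset Printing Implicit Defensive.

Section MatroidFacts.
Variables (T : finType) (M : matroid T).
Implicit Types A B C D S X : {set T}.

Lemma indep_card_le A : indep M A -> #|A| <= rank M.
Proof. by move=> iA; apply: (leq_bigmax_cond A); rewrite iA subsetT. Qed.

Lemma exists_indep_rank : exists2 A, indep M A & #|A| = rank M.
Proof.
have [|A] := @eq_bigmax_cond _ [pred A : {set T} | indep M A && (A \subset setT)] (fun A => #|A|).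
  by apply/card_gt0P; exists set0; rewrite inE indep0 sub0set.
by rewrite inE => /andP[iA _] rkA; exists A.
Qed.

Lemma basis_of_card B : indep M B -> #|B| = rank M -> is_basis M B.
Proof.
move=> iB cardB; rewrite /is_basis iB; apply/forallP => C; apply/implyP => /andP[iC sBC].
by rewrite eq_sym eqEcard sBC cardB indep_card_le.
Qed.

Lemma card_basis B : is_basis M B -> #|B| = rank M.
Proof.
case/andP => iB /forallP maxB; apply/eqP; rewrite eqn_leq indep_card_le //=.
have [A iA <-] := exists_indep_rank; rewrite leqNgt; apply/negP => ltBA.
have [x /setDP[_ xB] ixB] := indep_aug iB iA ltBA.
have /eqP xBB : x |: B == B by apply: (implyP (maxB _)); rewrite ixB subsetUr.
by move: xB; rewrite -xBB setU11.
Qed.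

Lemma indep_extend A B n : indep M A -> indep M B -> #|A| <= n <= #|B| ->
  exists A', [/\ indep M A', A \subset A', A' \subset A :|: B & #|A'| = n].
Proof.
move=> iA iB /andP[]; move Hk: (n - #|A|) => k.
elim: k A Hk iA => [|k IH] A Hk iA leAn lenB.
  exists A; split; rewrite ?subsetUl //.
  by apply/eqP; rewrite eqn_leq leAn -subn_eq0 Hk.
have ltAB : #|A| < #|B| by apply: leq_trans lenB; rewrite -subn_gt0 Hk.
have [x /setDP[xB xA] ixA] := indep_aug iA iB ltAB.
have cardxA : #|x |: A| = #|A|.+1 by rewrite cardsU1 xA.
have [||A' [iA' sxAA' sA'xAB cardA']] := IH (x |: A) _ ixA _ lenB.
- by rewrite cardxA subnS Hk.
- by rewrite cardxA -subn_gt0 Hk.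
exists A'; split => //; first exact: subset_trans (subsetUr _ _) sxAA'.
apply: subset_trans sA'xAB _.
by rewrite !subUset sub1set inE xB orbT subsetUl subsetUr.
Qed.

Lemma circuit_neq0 C : circuit M C -> C != set0.
Proof. by case/andP => dC _; apply: contraNneq dC => ->; exact: indep0. Qed.

Lemma circuit_proper_indep C D : circuit M C -> D \proper C -> indep M D.
Proof. by case/andP => _ /forallP/(_ D)/implyP. Qed.

Lemma circuit_sub_eq C D : circuit M C -> circuit M D -> D \subset C -> D = C.
Proof.
move=> cC /andP[dD _] sDC; apply/eqP; rewrite eqEproper sDC /=.
by apply: contra dD; exact: circuit_proper_indep.
Qed.

Lemma dep_sub_circuit S : ~~ indep M S -> exists2 C, circuit M C & C \subset S.
Proof.
elim: {S}_.+1 {-2}S (ltnSn #|S|) => // n IH S ltSn dS.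
have [minS | /forallPn[D]] := boolP [forall D : {set T}, (D \proper S) ==> indep M D].
  by exists S; rewrite // /circuit /min_dep dS.
rewrite negb_imply => /andP[pDS dD].
have [|C cC sCD] := IH D _ dD; first exact: leq_trans (proper_card pDS) ltSn.
by exists C; rewrite // (subset_trans sCD (proper_sub pDS)).
Qed.

Lemma circuit_of_dep_min S :
  ~~ indep M S -> (forall C, circuit M C -> C \proper S -> False) -> circuit M S.
Proof.
move=> dS minS; rewrite /circuit /min_dep dS; apply/forallP => D; apply/implyP => pDS.
apply/negPn/negP => /dep_sub_circuit[C cC sCD].
exact: minS cC (sub_proper_trans sCD pDS).
Qed.

Lemma circuit_spanning C : circuit M C -> rank M < #|C| -> spanning M C.
Proof.
move=> cC ltrC; have /set0Pn[x xC] := circuit_neq0 cC.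
have iCx : indep M (C :\ x) := circuit_proper_indep cC (properD1 xC).
rewrite /spanning eqn_leq; apply/andP; split.
  by apply/bigmax_leqP => A /andP[iA _]; exact: indep_card_le.
apply: (@leq_trans #|C :\ x|); first by move: ltrC; rewrite (cardsD1 x C) xC add1n ltnS.
by apply: (leq_bigmax_cond (C :\ x)); rewrite iCx subsetDl.
Qed.

Lemma circuit_cocircuit_meet C D : circuit M C -> cocircuit M D -> #|C :&: D| != 1.
Proof.
move=> cC /andP[dD /forallP minD]; apply/negP => /cards1P[x CDx].
have /setIP[xC xD] : x \in C :&: D by rewrite CDx set11.
have CD_x y : y \in C -> y \in D -> y = x by move=> yC yD; apply/set1P; rewrite -CDx inE yC yD.
have /existsP[B0 /andP[bB0 sDxB0]] := implyP (minD (D :\ x)) (properD1 xD).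
have iCx := circuit_proper_indep cC (properD1 xC).
have leCxB0 : #|C :\ x| <= rank M <= #|B0| by rewrite (indep_card_le iCx) (card_basis bB0) leqnn.
(* Extend C - x to a basis B inside (C - x) + B0: if x is in B then so is C,
   otherwise B avoids D, whose complement is then a basis. *)
have [B [iB sCxB sB /basis_of_card bB]] := indep_extend iCx (andP bB0).1 leCxB0.
have [xB | xNB] := boolP (x \in B).
  case/andP: cC => /negP[]; apply: indep_sub iB; apply/subsetP => y yC.
  by have [->//|nyx] := eqVneq y x; apply: (subsetP sCxB); rewrite !inE nyx.
case/negP: dD; apply/existsP; exists B; rewrite bB //=.
apply/subsetP => y yD; rewrite inE; apply: contraNN xNB => yB.
have [<-//|nyx] := eqVneq y x.
move: (subsetP sB y yB); rewrite !inE nyx /= => /orP[yC|yB0]; first by rewrite -(CD_x y).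
by move: (subsetP sDxB0 y); rewrite !inE nyx yD yB0 => /(_ isT).
Qed.

Lemma dep_cocircuit_compl X D :
  #|X| = rank M -> cocircuit M D -> D \subset ~: X -> ~~ indep M X.
Proof.
move=> cardX /andP[dD _] sDX; apply: contra dD => iX.
by apply/existsP; exists X; rewrite basis_of_card.
Qed.

End MatroidFacts.

Lemma card_count_mem (T : finType) (s : seq T) (A : {pred T}) :
  uniq s -> (forall x, x \in s) -> #|A| = count (fun x => x \in A) s.
Proof.
move=> s_uniq mem_s; rewrite -size_filter -(card_uniqP _) ?filter_uniq //.
by apply: eq_card => x; rewrite mem_filter mem_s andbT.
Qed.

Lemma subset_cardI (T : finType) (A B : {set T}) : (A \subset B) = (#|A :&: B| == #|A|).
Proof.
apply/setIidPl/eqP => [-> // | cardAB].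
by apply/eqP; rewrite eqEcard subsetIl cardAB leqnn.
Qed.

Definition symdiff (T : finType) (A B : {set T}) : {set T} := (A :\: B) :|: (B :\: A).

Lemma in_symdiff (T : finType) (A B : {set T}) x :
  (x \in symdiff A B) = ((x \in A) != (x \in B)).
Proof. by rewrite !inE; case: (x \in A); case: (x \in B). Qed.

Fixpoint subseqs (T : Type) (s : seq T) : seq (seq T) :=
  if s is x :: s' then [seq x :: t | t <- subseqs s'] ++ subseqs s' else [:: [::]].

Lemma filter_in_subseqs (T : eqType) (a : pred T) (s : seq T) : filter a s \in subseqs s.
Proof. by elim: s => //= x s IH; case: (a x); rewrite mem_cat ?map_f ?IH ?orbT. Qed.

Definition half (b : bool) : {set Gnd} := [set x : Gnd | x.2 == b].

Lemma Eset_half : Eset = half false.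
Proof.
by apply/setP => -[a b]; rewrite inE; apply/imsetP/idP => [[i _ [_ ->]] // | /eqP /= ->]; exists a.
Qed.

Lemma E'set_half : E'set = half true.
Proof.
by apply/setP => -[a b]; rewrite inE; apply/imsetP/idP => [[i _ [_ ->]] // | /eqP /= ->]; exists a.
Qed.

Lemma six1_symdiff i j k l : six1 i j k l = symdiff (quad i j k l) (half true).
Proof.
apply/setP => -[a b]; rewrite in_symdiff /six1 E'set_half !inE /e /e' !xpair_eqE.
by case: b; case: (a == i); case: (a == j); case: (a == k); case: (a == l).
Qed.

Lemma six2_symdiff i j k l : six2 i j k l = symdiff (quad i j k l) (half false).
Proof.
apply/setP => -[a b]; rewrite in_symdiff /six2 Eset_half !inE /e /e' !xpair_eqE.
by case: b; case: (a == i); case: (a == j); case: (a == k); case: (a == l).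
Qed.

Lemma card_quad_le4 i j k l : #|quad i j k l| <= 4.
Proof.
apply: leq_trans (card_size [:: e i; e j; e' k; e' l]).
by apply/subset_leq_card/subsetP => x; rewrite !inE -!orbA.
Qed.

(* Built from [inZp] rather than [enum], which does not reduce under [vm_compute]. *)
Definition elems : seq Gnd := [seq (inZp i, b) | i <- iota 0 6, b <- [:: false; true]].

Lemma elems_uniq : uniq elems.
Proof. by vm_compute. Qed.

Lemma mem_elems x : x \in elems.
Proof.
case: x => a b; apply/allpairsP; exists (nat_of_ord a, b).
by rewrite mem_iota ltn_ord valZpK; case: b.
Qed.

(* A reducible form of membership in [quadn q] (see [mem_quadn]); finset
   membership does not reduce under [vm_compute].  The indices of [q] are
   1-based, hence [x.1.+1]. *)
Definition quadb (q : nat * nat * nat * nat) (x : Gnd) : bool :=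
  let: (i, j, k, l) := q in x.1.+1 \in (if x.2 then [:: k; l] else [:: i; j]).

Lemma nest_indices_range :
  all (fun q : nat * nat * nat * nat => let: (i, j, k, l) := q in
         all (fun n => 0 < n <= 6) [:: i; j; k; l])
      (nest_circuits ++ nest_cocircuits).
Proof. by []. Qed.

Lemma eq_ix (a : 'I_6) n : 0 < n <= 6 -> (a == ix n) = (a.+1 == n).
Proof. by case: n => // n /andP[_ ltn6]; rewrite eqSS -val_eqE /= inordK. Qed.

Lemma mem_quadn q x : (q \in nest_circuits) || (q \in nest_cocircuits) ->
  (x \in quadn q) = quadb q x.
Proof.
rewrite -mem_cat => /(allP nest_indices_range).
case: q => [[[i j] k] l] /and5P[ri rj rk rl _]; case: x => a b.
rewrite !inE /e /e' !xpair_eqE !eq_ix //.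
by case: b; rewrite /= !inE ?andbF ?andbT ?orbF.
Qed.

Definition sixb (c : nat * nat * nat * nat) (b : bool) (x : Gnd) : bool :=
  quadb c x != (x.2 == b).

Lemma mem_six c b x : c \in nest_circuits -> (x \in symdiff (quadn c) (half b)) = sixb c b x.
Proof. by move=> cQ; rewrite in_symdiff mem_quadn ?cQ // inE. Qed.

Lemma card_elems (A : {pred Gnd}) (p : pred Gnd) :
  (forall x, (x \in A) = p x) -> #|A| = count p elems.
Proof. by move=> Ap; rewrite (card_count_mem A elems_uniq mem_elems); apply: eq_count. Qed.

Lemma card_quadn_setI q (A : {set Gnd}) (p : pred Gnd) :
  (q \in nest_circuits) || (q \in nest_cocircuits) -> (forall x, (x \in A) = p x) ->
  #|quadn q :&: A| = count (predI (quadb q) p) elems.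
Proof. by move=> qN Ap; apply: card_elems => x; rewrite inE mem_quadn // Ap. Qed.

(* Necessary conditions on the list [t] of elements of a circuit with at most
   six elements: [count (quadb q) t] is the size of its meet with [quadn q]. *)
Definition nest_candidate (t : seq Gnd) : bool :=
  [&& 0 < size t <= 6,
      all (fun d => count (quadb d) t != 1) nest_cocircuits &
      all (fun c => (count (quadb c) t == 4) ==> (size t == 4)) nest_circuits].

Definition nest_small_sets : seq (seq Gnd) :=
  [seq filter (quadb c) elems | c <- nest_circuits] ++
  [seq filter (sixb c b) elems | c <- nest_circuits, b <- [:: false; true]] ++
  [seq filter (fun x => x.2 == b) elems | b <- [:: false; true]].

Lemma nest_candidates_small :
  all (fun t => nest_candidate t ==> (t \in nest_small_sets)) (subseqs elems).
Proof. by vm_compute. Qed.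

Lemma nest_quad_counts : all (fun c => count (quadb c) elems == 4) nest_circuits.
Proof. by vm_compute. Qed.

Lemma nest_six_counts :
  all (fun c => all (fun b => count (sixb c b) elems == 6) [:: false; true]) nest_circuits.
Proof. by vm_compute. Qed.

Lemma nest_six_meets :
  all (fun c => all (fun b =>
         has (fun d => count (predI (quadb d) (sixb c b)) elems == 0) nest_cocircuits &&
         all (fun c' => count (predI (quadb c') (sixb c b)) elems != 4) nest_circuits)
       [:: false; true]) nest_circuits.
Proof. by vm_compute. Qed.

Lemma card_quadn c : c \in nest_circuits -> #|quadn c| = 4.
Proof.
move=> cQ; rewrite (@card_elems _ (quadb c)) => [|x]; last by rewrite mem_quadn ?cQ.
exact/eqP/(allP nest_quad_counts).
Qed.

Lemma card_six c b : c \in nest_circuits -> #|symdiff (quadn c) (half b)| = 6.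
Proof.
move=> cQ; rewrite (@card_elems _ (sixb c b)) => [|x]; last exact: mem_six.
by apply/eqP/(allP (allP nest_six_counts c cQ)); case: b.
Qed.

Lemma card_half b : #|half b| = 6.
Proof. by rewrite (@card_elems _ (fun x => x.2 == b)) => [|x]; [case: b | rewrite inE]. Qed.

Section Nest.
Variable M : matroid Gnd.
Hypothesis nest : std_nest M.

Lemma nest_circuit_quadn c : c \in nest_circuits -> circuit M (quadn c).
Proof. by move=> cQ; case: nest => _ [_ [/(_ c cQ)]]. Qed.

Lemma nest_cocircuit_quadn d : d \in nest_cocircuits -> cocircuit M (quadn d).
Proof. by move=> dD; case: nest => _ [_ [_ /(_ d dD)]]. Qed.

Lemma circuit_nest_candidate C : circuit M C -> #|C| <= 6 ->
  nest_candidate [seq x <- elems | x \in C].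
Proof.
move=> cC leC6; have cardC := @card_elems C (fun x => x \in C) (fun x => erefl).
have meetC q : (q \in nest_circuits) || (q \in nest_cocircuits) ->
    count (quadb q) [seq x <- elems | x \in C] = #|quadn q :&: C|.
  by move=> qN; rewrite count_filter (card_quadn_setI (p := fun x => x \in C) qN).
apply/and3P; split.
- by rewrite size_filter -cardC leC6 card_gt0 (circuit_neq0 cC).
- apply/allP => d dD.
  by rewrite meetC ?dD ?orbT // setIC (circuit_cocircuit_meet cC (nest_cocircuit_quadn dD)).
- apply/allP => c cQ; apply/implyP; rewrite meetC ?cQ // => /eqP meet4.
  have sQC : quadn c \subset C by rewrite subset_cardI meet4 card_quadn.
  by rewrite size_filter -cardC -(circuit_sub_eq cC (nest_circuit_quadn cQ) sQC) card_quadn.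
Qed.

Lemma nest_circuit_le6 C : circuit M C -> #|C| <= 6 ->
  [\/ exists2 c, c \in nest_circuits & C = quadn c,
      exists2 c, c \in nest_circuits & exists b, C = symdiff (quadn c) (half b)
    | exists b, C = half b].
Proof.
move=> cC leC6; set t := [seq x <- elems | x \in C].
have /implyP := allP nest_candidates_small t (filter_in_subseqs _ _).
move/(_ (circuit_nest_candidate cC leC6)).
have memC p : t = filter p elems -> forall x, (x \in C) = p x.
  by move=> tp x; move: (mem_filter p x elems); rewrite -tp /t mem_filter mem_elems !andbT.
rewrite 2!mem_cat => /or3P[/mapP[c cQ /memC eqC] | /allpairsP[[c b] [cQ _ /memC eqC]]
                         | /mapP[b _ /memC eqC]].
- by apply: Or31; exists c => //; apply/setP => x; rewrite eqC mem_quadn ?cQ.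
- by apply: Or32; exists c => //; exists b; apply/setP => x; rewrite eqC mem_six.
- by apply: Or33; exists b; apply/setP => x; rewrite eqC inE.
Qed.

Lemma nest_circuit_lt6 C : circuit M C -> #|C| < 6 -> exists2 c, c \in nest_circuits & C = quadn c.
Proof.
move=> cC ltC6; case: (nest_circuit_le6 cC (ltnW ltC6)) => [// | [c cQ [b eC]] | [b eC]];
  by move: ltC6; rewrite eC ?card_six ?card_half.
Qed.

Lemma nest_six_circuit c b : c \in nest_circuits -> circuit M (symdiff (quadn c) (half b)).
Proof.
move=> cQ; set S := symdiff _ _.
have meetS q : (q \in nest_circuits) || (q \in nest_cocircuits) ->
    #|quadn q :&: S| = count (predI (quadb q) (sixb c b)) elems.
  by move=> qN; apply: card_quadn_setI => // x; rewrite mem_six.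
have bB : b \in [:: false; true] by case: (b).
have /andP[/hasP[d dD /eqP dS0] noQ] := allP (allP nest_six_meets c cQ) b bB.
apply: circuit_of_dep_min.
  apply: (dep_cocircuit_compl _ (nest_cocircuit_quadn dD)); first by rewrite card_six // nest.1.
  by rewrite -disjoints_subset -setI_eq0 -cards_eq0 meetS ?dD ?orbT // dS0.
move=> C cC pCS; have [c' c'Q eC] : exists2 c', c' \in nest_circuits & C = quadn c'.
  by apply: nest_circuit_lt6 cC _; move: (proper_card pCS); rewrite card_six.
have := allP noQ c' c'Q; rewrite -meetS ?c'Q // -eC (setIidPl (proper_sub pCS)).
by rewrite eC card_quadn.
Qed.

End Nest.

Theorem lemma3p3 (M : matroid Gnd) : std_nest M ->
  (* (i) *)
  (forall C : {set Gnd}, circuit M C -> ~~ spanning M C -> #|C| = 4 \/ #|C| = 6) /\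
  (* (ii) *)
  (forall C : {set Gnd}, circuit M C -> #|C| = 4 ->
     exists2 q, q \in nest_circuits & C = quadn q) /\
  (* (iii) *)
  (forall i j k l : 'I_6, circuit M (quad i j k l) ->
     circuit M (six1 i j k l) /\ #|six1 i j k l| = 6 /\
     circuit M (six2 i j k l) /\ #|six2 i j k l| = 6) /\
  (* (iv) *)
  (forall C : {set Gnd}, circuit M C -> #|C| = 6 ->
     ~ (exists i j k l : 'I_6, circuit M (quad i j k l) /\
          (C = six1 i j k l \/ C = six2 i j k l)) ->
     C = Eset \/ C = E'set).
Proof.
move=> nest; split; [|split; [|split]].
- move=> C cC nspanC; have leC6 : #|C| <= 6.
    by rewrite leqNgt; apply: contra nspanC => ltC; apply: circuit_spanning; rewrite ?nest.1.
  case: (nest_circuit_le6 nest cC leC6) => [[c cQ ->] | [c cQ [b ->]] | [b ->]];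
    by [left; rewrite card_quadn | right; rewrite card_six | right; rewrite card_half].
- by move=> C cC C4; apply: (nest_circuit_lt6 nest cC); rewrite C4.
- move=> i j k l circQ.
  have [c cQ eQ] := nest_circuit_lt6 nest circQ (leq_ltn_trans (card_quad_le4 i j k l) (isT : 4 < 6)).
  rewrite six1_symdiff six2_symdiff eQ !card_six //.
  by split; [|split; [|split]]; rewrite // nest_six_circuit.
move=> C cC C6 notsix; case: (nest_circuit_le6 nest cC (eq_leq C6)) => [[c cQ eC] | [c cQ [b eC]] | [b ->]].
- by move: C6; rewrite eC card_quadn.
- case: notsix; move: eC (nest_circuit_quadn nest cQ); case: c {cQ} => [[[i j] k] l] eC cQ.
  exists (ix i), (ix j), (ix k), (ix l); split => //.
  by rewrite six1_symdiff six2_symdiff; case: b eC => ->; [left | right].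
- by case: b; rewrite ?Eset_half ?E'set_half; [right | left].
Qed.
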